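(* Let $(G,M,\Delta)$ be a Garside structure and $(H,N,\delta)$ a parabolic substructure. Put $\omega=\delta^{-1}\Delta$ and $\Phi(\alpha)=\Delta\alpha\Delta^{-1}$. Let $k\ge0$ be an integer and let $a\in M$ be of the form $a=\omega_1\omega_2\cdots\omega_k c$, where $\omega_i=\Phi^{-i+1}(\omega)$ for $i\in\{1,\dots,k\}$, $c\in M$, $\Phi^{-k}(\omega)\not\le_L c$, and $c$ is $\Phi^{-k}(N)$-reduced. Then $\lg(a)=\lg(c)+k$.
   Context: Let $G$ be a group and $M$ a submonoid with $M\cap M^{-1}=\{1\}$. Define $\alpha\le_L\beta$ iff $\alpha^{-1}\beta\in M$, and $\alpha\le_R\beta$ iff $\beta\alpha^{-1}\in M$. For $a\in M$ let $\mathrm{Div}_L(a)=\{b\in M: b\le_L a\}$, $\mathrm{Div}_R(a)=\{b\in M: b\le_R a\}$; $a$ is balanced if these coincide, and then $\mathrm{Div}(a)$ denotes this set. $M$ is Noetherian if each $a\in M$ admits an $n$ such that $a$ is not a product of more than $n$ non-trivial factors. A Garside structure $(G,M,\Delta)$: $\Delta\in M$ balanced, $M$ Noetherian, $\mathrm{Div}(\Delta)$ finite and generating $M$ as a monoid and $G$ as a group, $(G,\le_L)$ a lattice with meet $\wedge_L$. A parabolic substructure $(H,N,\delta)$: $\delta\in M$ balanced, $H$ (resp. $N$) the subgroup (resp. submonoid) generated by $\mathrm{Div}(\delta)$, and $\mathrm{Div}(\delta)=\mathrm{Div}(\Delta)\cap N$; it is assumed $H\ne\{1\}$. $\lg$ is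 word length on $G$ with respect to $\mathcal S=\mathrm{Div}(\Delta)\setminus\{1\}$. For $j\in\mathbb Z$, an element $c\in M$ is $\Phi^{j}(N)$-reduced if the only $b\in\Phi^{j}(N)$ with $b\le_L c$ is $b=1$ (equivalently $c\wedge_L\Phi^{j}(\delta)=1$). *)

From Stdlib Require Import List ZArith ClassicalEpsilon.
Import ListNotations.

Set Implicit Arguments.

Record Group := {
  carrier :> Type;
  gmul : carrier -> carrier -> carrier;
  ginv : carrier -> carrier;
  gone : carrier;
  gmulA : forall x y z, gmul x (gmul y z) = gmul (gmul x y) z;
  gmul1l : forall x, gmul gone x = x;
  gmul1r : forall x, gmul x gone = x;
  gmulVl : forall x, gmul (ginv x) x = gone;
  gmulVr : forall x, gmul x (ginv x) = gone
}.

Arguments gmul {g} _ _.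
Arguments ginv {g} _.
Arguments gone {g}.

Section Garside.
Context {G : Group}.

Fixpoint lprod (l : list G) : G :=
  match l with
  | [] => gone
  | x :: l' => gmul x (lprod l')
  end.

Fixpoint gpow (x : G) (n : nat) : G :=
  match n with
  | O => gone
  | S n' => gmul x (gpow x n')
  end.

Definition zpow (x : G) (z : Z) : G :=
  match z with
  | Z0 => gone
  | Zpos p => gpow x (Pos.to_nat p)
  | Zneg p => ginv (gpow x (Pos.to_nat p))
  end.

Variable M : G -> Prop.

Definition leL (a b : G) : Prop := M (gmul (ginv a) b).
Definition leR (a b : G) : Prop := M (gmul b (ginv a)).

Definition DivL (a b : G) : Prop := M b /\ leL b a.
Definition DivR (a b : G) : Prop := M b /\ leR b a.

Definition balanced (a : G) : Prop := forall b, DivL a b <-> DivR a b.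

(** Div(a) (meaningful when a is balanced) *)
Definition Div (a : G) : G -> Prop := DivL a.

Definition submonoid : Prop :=
  M gone /\ forall x y, M x -> M y -> M (gmul x y).

Definition pointed : Prop := forall x, M x -> M (ginv x) -> x = gone.

Definition noetherian : Prop :=
  forall a, M a -> exists n : nat, forall l : list G,
    (forall x, In x l -> M x /\ x <> gone) -> lprod l = a -> length l <= n.

Definition finite_pred (P : G -> Prop) : Prop :=
  exists l : list G, forall x, P x <-> In x l.

Definition gen_monoid (P : G -> Prop) (x : G) : Prop :=
  exists l : list G, (forall y, In y l -> P y) /\ lprod l = x.

Definition gen_group (P : G -> Prop) (x : G) : Prop :=
  exists l : list G, (forall y, In y l -> P y \/ P (ginv y)) /\ lprod l = x.

Definition is_meetL (a b m : G) : Prop :=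
  leL m a /\ leL m b /\ forall x, leL x a -> leL x b -> leL x m.
Definition is_joinL (a b j : G) : Prop :=
  leL a j /\ leL b j /\ forall x, leL a x -> leL b x -> leL j x.

Definition lattice_L : Prop :=
  forall a b, (exists m, is_meetL a b m) /\ (exists j, is_joinL a b j).

Definition GarsideStructure (Delta : G) : Prop :=
  submonoid /\ pointed /\
  M Delta /\ balanced Delta /\ noetherian /\
  finite_pred (Div Delta) /\
  (forall x, M x <-> gen_monoid (Div Delta) x) /\
  (forall x : G, gen_group (Div Delta) x) /\
  lattice_L.

Definition Nsub (delta : G) : G -> Prop := gen_monoid (Div delta).
Definition Hsub (delta : G) : G -> Prop := gen_group (Div delta).

Definition ParabolicSub (Delta delta : G) : Prop :=
  M delta /\ balanced delta /\
  (forall x, Div delta x <-> (Div Delta x /\ Nsub delta x)) /\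
  (exists h, Hsub delta h /\ h <> gone).

Definition PhiZ (Delta : G) (j : Z) (x : G) : G :=
  gmul (zpow Delta j) (gmul x (ginv (zpow Delta j))).

Definition reduced (Delta delta : G) (j : Z) (c : G) : Prop :=
  forall b, (exists n, Nsub delta n /\ b = PhiZ Delta j n) -> leL b c -> b = gone.

Definition Sgen (Delta : G) (x : G) : Prop := Div Delta x /\ x <> gone.

Definition word_of_len (Delta : G) (g : G) (n : nat) : Prop :=
  exists l : list G, (forall y, In y l -> Sgen Delta y \/ Sgen Delta (ginv y))
    /\ lprod l = g /\ length l = n.

Definition is_lg (Delta : G) (g : G) (n : nat) : Prop :=
  word_of_len Delta g n /\ forall m, word_of_len Delta g m -> n <= m.

Definition lg (Delta : G) (g : G) : nat :=
  epsilon (inhabits 0%nat) (fun n => is_lg Delta g n).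

Fixpoint omega_prod (Delta omega : G) (k : nat) : G :=
  match k with
  | O => gone
  | S i => gmul (omega_prod Delta omega i) (PhiZ Delta (- Z.of_nat i) omega)
  end.

End Garside.

(* Since omega_1 ... omega_k = delta^-k Delta^k, a geodesic word of length L
   for a = omega_1 ... omega_k c gives a <= Delta^L, so a is a product of L
   simple elements.  Reducedness of c makes delta and omega_1 ... omega_k c
   left coprime (induction on k, conjugating by Delta), and this forces
   Delta /\ a = omega.  Dividing off this left-greedy factor and conjugating
   by Phi, k times, leaves c as a product of L - k simples, so lg c <= L - k.
   The other inequality is subadditivity of lg, each omega_i being simple. *)

From Pilot Require Import Defs.
From Stdlib Require Import ZArith List Lia Wf_nat Classical ClassicalEpsilon.
Import ListNotations.

Declare Scope group_scope.
Local Open Scope group_scope.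
Local Notation "x * y" := (gmul x y) : group_scope.
Local Notation "x ^-1" := (ginv x) (at level 2, left associativity, format "x ^-1") : group_scope.

Section GroupFacts.
Variable G : Group.
Implicit Types x y z : G.

Lemma gmulA' x y z : x * y * z = x * (y * z).
Proof. now rewrite gmulA. Qed.

Lemma gmulK x y : x^-1 * (x * y) = y.
Proof. now rewrite gmulA, gmulVl, gmul1l. Qed.

Lemma gmulKV x y : x * (x^-1 * y) = y.
Proof. now rewrite gmulA, gmulVr, gmul1l. Qed.

Lemma ginv_unique x y : x * y = gone -> x^-1 = y.
Proof. intro E. now rewrite <- (gmul1r _ x^-1), <- E, gmulK. Qed.

Lemma ginvK x : x^-1^-1 = x.
Proof. apply ginv_unique, gmulVl. Qed.

Lemma ginv_one : (@gone G)^-1 = gone.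
Proof. apply ginv_unique, gmul1l. Qed.

Lemma ginv_mul x y : (x * y)^-1 = y^-1 * x^-1.
Proof. apply ginv_unique. now rewrite gmulA', gmulKV, gmulVr. Qed.

Lemma gpow_comm x n : x * gpow x n = gpow x n * x.
Proof.
  induction n as [|n IH]; simpl.
  - now rewrite gmul1l, gmul1r.
  - now rewrite <- gmulA, <- IH.
Qed.

Lemma lprod_app (l1 l2 : list G) : lprod (l1 ++ l2) = lprod l1 * lprod l2.
Proof.
  induction l1 as [|x l1 IH]; simpl.
  - now rewrite gmul1l.
  - now rewrite IH, gmulA.
Qed.

End GroupFacts.

Ltac gsimpl := repeat rewrite ?ginv_mul, ?ginvK, ?ginv_one, ?gmulA', ?gmul1l, ?gmul1r,
  ?gmulVl, ?gmulVr, ?gmulK, ?gmulKV.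

Section Garside.
Context {G : Group} {M : G -> Prop} {Delta : G}.
Hypothesis HG : GarsideStructure M Delta.
Implicit Types x y z s t u v w : G.

Local Notation leL := (leL M).
Local Notation simple := (Div M Delta).

Lemma M_one : M gone.
Proof. now destruct HG as [[? _] _]. Qed.

Lemma M_mul x y : M x -> M y -> M (x * y).
Proof. destruct HG as [[_ HM] _]. apply HM. Qed.

Lemma M_pointed x : M x -> M x^-1 -> x = gone.
Proof. destruct HG as (_ & HM & _). apply HM. Qed.

Lemma M_Delta : M Delta.
Proof. now destruct HG as (_ & _ & ? & _). Qed.

Lemma Delta_balanced : balanced M Delta.
Proof. now destruct HG as (_ & _ & _ & ? & _). Qed.

Lemma M_gen x : M x -> gen_monoid simple x.
Proof. destruct HG as (_ & _ & _ & _ & _ & _ & HM & _). apply HM. Qed.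

Lemma G_gen x : gen_group simple x.
Proof. now destruct HG as (_ & _ & _ & _ & _ & _ & _ & ? & _). Qed.

Lemma leL_lattice : lattice_L M.
Proof. now destruct HG as (_ & _ & _ & _ & _ & _ & _ & _ & ?). Qed.

Lemma leL_refl x : leL x x.
Proof. unfold leL. rewrite gmulVl. apply M_one. Qed.

Lemma leL_trans x y z : leL x y -> leL y z -> leL x z.
Proof.
  unfold leL. intros Hxy Hyz.
  replace (x^-1 * z) with (x^-1 * y * (y^-1 * z)) by now gsimpl.
  now apply M_mul.
Qed.

Lemma leL_antisym x y : leL x y -> leL y x -> x = y.
Proof.
  unfold leL. intros Hxy Hyx.
  assert (E : x^-1 * y = gone) by (apply M_pointed; gsimpl; assumption).
  now rewrite <- (gmulKV _ x y), E, gmul1r.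
Qed.

Lemma leL_one x : leL gone x <-> M x.
Proof. unfold leL. now rewrite ginv_one, gmul1l. Qed.

Lemma leL_mulr x y : leL x (x * y) <-> M y.
Proof. unfold leL. now rewrite gmulK. Qed.

Lemma leL_mul2l z x y : leL (z * x) (z * y) <-> leL x y.
Proof. unfold leL. now gsimpl. Qed.

Definition phi x := Delta * x * Delta^-1.
Definition phi_inv x := Delta^-1 * x * Delta.

Lemma phi_mul x y : phi (x * y) = phi x * phi y.
Proof. unfold phi. now gsimpl. Qed.

Lemma phi_inv_mul x y : phi_inv (x * y) = phi_inv x * phi_inv y.
Proof. unfold phi_inv. now gsimpl. Qed.

Lemma phi_ginv x : phi x^-1 = (phi x)^-1.
Proof. unfold phi. now gsimpl. Qed.

Lemma phi_inv_ginv x : phi_inv x^-1 = (phi_inv x)^-1.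
Proof. unfold phi_inv. now gsimpl. Qed.

Lemma phiK x : phi_inv (phi x) = x.
Proof. unfold phi, phi_inv. now gsimpl. Qed.

Lemma phi_invK x : phi (phi_inv x) = x.
Proof. unfold phi, phi_inv. now gsimpl. Qed.

Lemma phi_one : phi gone = gone.
Proof. unfold phi. now gsimpl. Qed.

Lemma phi_inv_one : phi_inv gone = gone.
Proof. unfold phi_inv. now gsimpl. Qed.

Lemma phi_Delta : phi Delta = Delta.
Proof. unfold phi. now gsimpl. Qed.

Lemma phi_inv_Delta : phi_inv Delta = Delta.
Proof. unfold phi_inv. now gsimpl. Qed.

(* By balancedness, s, Delta s^-1 and s^-1 Delta are right as well as left
   divisors of Delta. *)
Lemma M_phi_simple s : simple s -> M (phi s).
Proof.
  intro Hs. apply Delta_balanced in Hs as [Ms HsR]. unfold leR in HsR.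
  assert (Hc : DivL M Delta (Delta * s^-1)).
  { split; [exact HsR|]. unfold leL. gsimpl. exact Ms. }
  apply Delta_balanced in Hc as [_ Hc]. unfold leR in Hc. revert Hc.
  unfold phi. now gsimpl.
Qed.

Lemma M_phi_inv_simple s : simple s -> M (phi_inv s).
Proof.
  intros [Ms HsL]. unfold leL in HsL.
  assert (Hc : DivR M Delta (s^-1 * Delta)).
  { split; [exact HsL|]. unfold leR. gsimpl. exact Ms. }
  apply Delta_balanced in Hc as [_ Hc]. unfold leL in Hc. revert Hc.
  unfold phi_inv. now gsimpl.
Qed.

Lemma M_hom (f : G -> G) :
  (forall x y, f (x * y) = f x * f y) -> f gone = gone ->
  (forall s, simple s -> M (f s)) -> forall x, M x -> M (f x).
Proof.
  intros f_mul f_one f_simple x Mx.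
  destruct (M_gen x Mx) as [l [Hl <-]]. clear Mx.
  induction l as [|s l IH]; simpl.
  - rewrite f_one. apply M_one.
  - rewrite f_mul. apply M_mul.
    + apply f_simple, Hl. now left.
    + apply IH. intros y Hy. apply Hl. now right.
Qed.

Lemma M_phi x : M x -> M (phi x).
Proof. exact (M_hom phi phi_mul phi_one M_phi_simple x). Qed.

Lemma M_phi_inv x : M x -> M (phi_inv x).
Proof. exact (M_hom phi_inv phi_inv_mul phi_inv_one M_phi_inv_simple x). Qed.

Lemma leL_phi x y : leL x y -> leL (phi x) (phi y).
Proof. unfold leL. rewrite <- phi_ginv, <- phi_mul. apply M_phi. Qed.

Lemma leL_phi_inv x y : leL x y -> leL (phi_inv x) (phi_inv y).
Proof. unfold leL. rewrite <- phi_inv_ginv, <- phi_inv_mul. apply M_phi_inv. Qed.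

Lemma simple_phi s : simple s -> simple (phi s).
Proof.
  intros [Ms Hs]. split; [now apply M_phi|].
  rewrite <- phi_Delta. now apply leL_phi.
Qed.

Lemma simple_phi_inv s : simple s -> simple (phi_inv s).
Proof.
  intros [Ms Hs]. split; [now apply M_phi_inv|].
  rewrite <- phi_inv_Delta. now apply leL_phi_inv.
Qed.

Lemma iter_phi n x : Nat.iter n phi x = gpow Delta n * x * (gpow Delta n)^-1.
Proof.
  induction n as [|n IH]; simpl; [now gsimpl|].
  rewrite IH. unfold phi. now gsimpl.
Qed.

Lemma iter_phi_inv n x : Nat.iter n phi_inv x = (gpow Delta n)^-1 * x * gpow Delta n.
Proof.
  induction n as [|n IH]; simpl; [now gsimpl|].
  rewrite IH. unfold phi_inv. rewrite (gpow_comm _ Delta n). now gsimpl.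
Qed.

Lemma PhiZ_neg k x : PhiZ Delta (- Z.of_nat k) x = Nat.iter k phi_inv x.
Proof.
  rewrite iter_phi_inv. unfold PhiZ.
  destruct k as [|k]; simpl; [now gsimpl|].
  rewrite SuccNat2Pos.id_succ; simpl. now gsimpl.
Qed.

Lemma M_gpow n : M (gpow Delta n).
Proof.
  induction n as [|n IH]; simpl; [apply M_one|].
  apply M_mul; [apply M_Delta | exact IH].
Qed.

Lemma letter_leL_Delta y : Sgen M Delta y \/ Sgen M Delta y^-1 -> leL y Delta.
Proof.
  intros [[[_ Hy] _] | [[My _] _]]; [exact Hy|].
  unfold leL. apply M_mul; [exact My | apply M_Delta].
Qed.

Lemma word_leL_Delta_pow x n : word_of_len M Delta x n -> leL x (gpow Delta n).
Proof.
  intros (l & Hl & <- & <-). induction l as [|y l IH]; simpl; [apply leL_refl|].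
  assert (Hy : leL y Delta) by (apply letter_leL_Delta, Hl; now left).
  assert (Hl' : leL (lprod l) (gpow Delta (length l)))
    by (apply IH; intros z Hz; apply Hl; now right).
  unfold leL in *.
  replace ((y * lprod l)^-1 * (Delta * gpow Delta (length l)))
    with ((lprod l)^-1 * gpow Delta (length l) * Nat.iter (length l) phi_inv (y^-1 * Delta))
    by (rewrite iter_phi_inv; now gsimpl).
  apply M_mul; [exact Hl'|].
  apply Nat.iter_invariant; [exact M_phi_inv | exact Hy].
Qed.

Inductive simple_prod : nat -> G -> Prop :=
  | simple_prod0 : simple_prod 0 gone
  | simple_prodS n s x : simple s -> simple_prod n x -> simple_prod (S n) (s * x).

Lemma M_simple_prod n x : simple_prod n x -> M x.
Proof.
  induction 1 as [|n s x [Ms _] _ Mx]; [apply M_one | now apply M_mul].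
Qed.

Lemma simple_prod_hom (f : G -> G) :
  (forall x y, f (x * y) = f x * f y) -> f gone = gone ->
  (forall s, simple s -> simple (f s)) -> forall n x, simple_prod n x -> simple_prod n (f x).
Proof.
  intros f_mul f_one f_simple n x.
  induction 1; [rewrite f_one | rewrite f_mul]; constructor; auto.
Qed.

Lemma simple_prod_phi n x : simple_prod n x -> simple_prod n (phi x).
Proof. exact (simple_prod_hom phi phi_mul phi_one simple_phi n x). Qed.

Lemma simple_prod_phi_inv n x : simple_prod n x -> simple_prod n (phi_inv x).
Proof. exact (simple_prod_hom phi_inv phi_inv_mul phi_inv_one simple_phi_inv n x). Qed.

(* The join of w and Delta supplies the first simple factor of w^-1 Delta^(n+1). *)
Lemma simple_prod_leL_Delta_pow_compl n : forall w,
  M w -> leL w (gpow Delta n) -> simple_prod n (w^-1 * gpow Delta n).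
Proof.
  induction n as [|n IH]; intros w Mw Hw; simpl in *.
  - unfold leL in Hw. rewrite gmul1r in Hw.
    rewrite (M_pointed w Mw Hw), ginv_one, gmul1l. constructor.
  - destruct (leL_lattice w Delta) as [_ [j (Hwj & HDj & Hj)]].
    assert (Hj_wD : leL j (w * Delta)).
    { apply Hj; [now apply leL_mulr, M_Delta|].
      unfold leL. rewrite gmulA. exact (M_phi_inv w Mw). }
    assert (Hj_pow : leL (Delta^-1 * j) (gpow Delta n)).
    { rewrite <- (leL_mul2l Delta). rewrite gmulKV.
      apply Hj; [exact Hw|]. apply leL_mulr, M_gpow. }
    replace (w^-1 * (Delta * gpow Delta n))
      with (w^-1 * j * ((Delta^-1 * j)^-1 * gpow Delta n)) by now gsimpl.
    constructor; [split|].
    + exact Hwj.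
    + rewrite <- (leL_mul2l w), gmulKV. exact Hj_wD.
    + apply IH; [exact HDj | exact Hj_pow].
Qed.

Lemma simple_prod_leL_Delta_pow n x :
  M x -> leL x (gpow Delta n) -> simple_prod n x.
Proof.
  intros Mx Hx.
  assert (Mw : M (gpow Delta n * x^-1)).
  { apply (Nat.iter_invariant n _ phi M M_phi) in Hx. revert Hx.
    unfold leL. rewrite iter_phi. now gsimpl. }
  assert (Hw : leL (gpow Delta n * x^-1) (gpow Delta n)) by (unfold leL; now gsimpl).
  pose proof (simple_prod_leL_Delta_pow_compl n _ Mw Hw) as Hn. revert Hn. now gsimpl.
Qed.

Definition left_coprime a b := forall u, M u -> leL u a -> leL u b -> u = gone.

Lemma left_coprime_phi_inv a b : left_coprime a b -> left_coprime (phi_inv a) (phi_inv b).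
Proof.
  intros Hab u Mu Ha Hb.
  apply leL_phi in Ha, Hb. rewrite phi_invK in Ha, Hb.
  rewrite <- (phiK u), (Hab (phi u) (M_phi u Mu) Ha Hb). apply phi_inv_one.
Qed.

(* For u dividing Delta and s Y, the quotient s^-1 (u \/ s) divides both
   s^-1 Delta and Y. *)
Lemma meet_Delta_left_coprime s Y :
  simple s -> M Y -> left_coprime (s^-1 * Delta) Y -> is_meetL M Delta (s * Y) s.
Proof.
  intros [Ms Hs] MY Hcop. split; [exact Hs|]. split; [now apply leL_mulr|].
  intros u HuD HuY.
  destruct (leL_lattice u s) as [_ [j (Huj & Hsj & Hj)]].
  assert (E : s^-1 * j = gone).
  { apply Hcop; [exact Hsj | |].
    - apply leL_mul2l. now apply Hj.
    - rewrite <- (leL_mul2l s), gmulKV. apply Hj; [exact HuY | now apply leL_mulr]. }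
  rewrite <- (gmulKV _ s j), E, gmul1r in Huj. exact Huj.
Qed.

(* With x = t y and h = Delta /\ y, the element s^-1 t h is simple and
   s^-1 x = (s^-1 t h) (h^-1 y). *)
Lemma simple_prod_meet_Delta n : forall x s,
  simple_prod (S n) x -> is_meetL M Delta x s -> simple_prod n (s^-1 * x).
Proof.
  induction n as [|n IH]; intros x s Hx (HsD & Hsx & Hs);
    inversion Hx as [|? t y [Mt HtD] Hy]; subst.
  - inversion Hy; subst. rewrite gmul1r in *.
    assert (Hts : leL t s) by (apply Hs; [exact HtD | apply leL_refl]).
    rewrite (leL_antisym _ _ Hsx Hts), gmulVl. constructor.
  - assert (My : M y) by exact (M_simple_prod _ _ Hy).
    assert (Hts : leL t s) by (apply Hs; [exact HtD | now apply leL_mulr]).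
    destruct (leL_lattice Delta y) as [[h Hh] _].
    pose proof (IH y h Hy Hh) as Hhy. destruct Hh as (HhD & _ & Hh).
    assert (Hr : leL (t^-1 * s) h).
    { apply Hh.
      - unfold leL in *.
        replace ((t^-1 * s)^-1 * Delta) with (s^-1 * Delta * phi_inv t)
          by (unfold phi_inv; now gsimpl).
        apply M_mul; [exact HsD | exact (M_phi_inv t Mt)].
      - rewrite <- (leL_mul2l t), gmulKV. exact Hsx. }
    replace (s^-1 * (t * y)) with (s^-1 * (t * h) * (h^-1 * y)) by now gsimpl.
    constructor; [split | exact Hhy].
    + unfold leL in Hr. revert Hr. now gsimpl.
    + unfold leL in *.
      replace ((s^-1 * (t * h))^-1 * Delta) with (h^-1 * Delta * phi_inv (t^-1 * s))
        by (unfold phi_inv; now gsimpl).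
      apply M_mul; [exact HhD | exact (M_phi_inv _ Hts)].
Qed.

Definition has_word_le x n := exists m, m <= n /\ word_of_len M Delta x m.

Lemma word_of_len_mul x y n m :
  word_of_len M Delta x n -> word_of_len M Delta y m -> word_of_len M Delta (x * y) (n + m).
Proof.
  intros (l1 & H1 & <- & <-) (l2 & H2 & <- & <-). exists (l1 ++ l2). split; [|split].
  - intros z Hz. apply in_app_or in Hz as [Hz | Hz]; auto.
  - apply lprod_app.
  - apply length_app.
Qed.

Lemma has_word_le_mul x y n m :
  has_word_le x n -> has_word_le y m -> has_word_le (x * y) (n + m).
Proof.
  intros (n' & Hn & Hx) (m' & Hm & Hy). exists (n' + m').
  split; [lia | now apply word_of_len_mul].
Qed.

Lemma has_word_le_letter y x n :
  simple y \/ simple y^-1 -> has_word_le x n -> has_word_le (y * x) (S n).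
Proof.
  intros Hy Hx. destruct (classic (y = gone)) as [-> | Hy1].
  - rewrite gmul1l. destruct Hx as (m & Hm & Hx). exists m. split; [lia | exact Hx].
  - apply (has_word_le_mul y x 1 n); [|exact Hx]. exists 1. split; [lia|].
    exists [y]. split; [|split; [apply gmul1r | reflexivity]].
    intros z [<- | []].
    assert (Hy1' : y^-1 <> gone) by (intro E; apply Hy1; now rewrite <- (ginvK _ y), E, ginv_one).
    destruct Hy; [left | right]; split; assumption.
Qed.

Lemma has_word_le_one : has_word_le gone 0.
Proof. exists 0. split; [lia|]. exists []. repeat split. intros y []. Qed.

Lemma has_word_le_simple_prod n x : simple_prod n x -> has_word_le x n.
Proof.
  induction 1 as [|n s x Hs _ IH].
  - apply has_word_le_one.
  - apply has_word_le_letter; [now left | exact IH].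
Qed.

Lemma word_exists x : exists n, word_of_len M Delta x n.
Proof.
  destruct (G_gen x) as [l [Hl <-]].
  enough (Hw : has_word_le (lprod l) (length l)) by (destruct Hw as (m & _ & Hm); now exists m).
  induction l as [|y l IH]; simpl.
  - apply has_word_le_one.
  - apply has_word_le_letter; [apply Hl; now left|].
    apply IH. intros z Hz. apply Hl. now right.
Qed.

Lemma lg_spec x : is_lg M Delta x (lg M Delta x).
Proof.
  unfold lg. apply epsilon_spec.
  destruct (dec_inh_nat_subset_has_unique_least_element (word_of_len M Delta x))
    as (n & Hn & _).
  - intro n. apply classic.
  - apply word_exists.
  - now exists n.
Qed.

Lemma lg_le x n : has_word_le x n -> lg M Delta x <= n.
Proof.
  intros (m & Hm & Hx). apply (Nat.le_trans _ m); [now apply lg_spec | exact Hm].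
Qed.

Lemma lg_simple_prod_le n x : simple_prod n x -> lg M Delta x <= n.
Proof. intro Hx. now apply lg_le, has_word_le_simple_prod. Qed.

Lemma lg_mul_le x y : lg M Delta (x * y) <= lg M Delta x + lg M Delta y.
Proof.
  apply lg_le, has_word_le_mul.
  - exists (lg M Delta x). split; [lia | apply lg_spec].
  - exists (lg M Delta y). split; [lia | apply lg_spec].
Qed.

Lemma leL_Delta_pow_lg x : leL x (gpow Delta (lg M Delta x)).
Proof. apply word_leL_Delta_pow, lg_spec. Qed.

Lemma lg_simple_le s : simple s -> lg M Delta s <= 1.
Proof.
  intro Hs. apply lg_simple_prod_le. rewrite <- (gmul1r _ s).
  constructor; [exact Hs | constructor].
Qed.

Lemma simple_PhiZ_neg k w : simple w -> simple (PhiZ Delta (- Z.of_nat k) w).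
Proof. rewrite PhiZ_neg. apply Nat.iter_invariant, simple_phi_inv. Qed.

Lemma omega_prod_S_l w k : omega_prod Delta w (S k) = w * phi_inv (omega_prod Delta w k).
Proof.
  induction k as [|k IH].
  - cbn [omega_prod]. rewrite PhiZ_neg, phi_inv_one. now gsimpl.
  - change (omega_prod Delta w (S (S k)))
      with (omega_prod Delta w (S k) * PhiZ Delta (- Z.of_nat (S k)) w).
    rewrite IH at 1. cbn [omega_prod].
    rewrite !PhiZ_neg, Nat.iter_succ, !phi_inv_mul. now gsimpl.
Qed.

Lemma M_omega_prod w k : simple w -> M (omega_prod Delta w k).
Proof.
  intros [Mw _]. induction k as [|k IH]; [apply M_one|].
  rewrite omega_prod_S_l. apply M_mul; [exact Mw | exact (M_phi_inv _ IH)].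
Qed.

Lemma lg_omega_prod_le w k : simple w -> lg M Delta (omega_prod Delta w k) <= k.
Proof.
  intro Hw. induction k as [|k IH]; cbn [omega_prod].
  - apply lg_simple_prod_le. constructor.
  - pose proof (lg_simple_le _ (simple_PhiZ_neg k w Hw)).
    pose proof (lg_mul_le (omega_prod Delta w k) (PhiZ Delta (- Z.of_nat k) w)). lia.
Qed.

Section Parabolic.
Variable delta : G.
Hypothesis HP : ParabolicSub M Delta delta.

Local Notation omega := (delta^-1 * Delta).
Local Notation reduced := (reduced M Delta delta).

Lemma M_delta : M delta.
Proof. now destruct HP. Qed.

Lemma Div_delta x : Div M delta x <-> simple x /\ Defs.Nsub M delta x.
Proof. destruct HP as (_ & _ & HD & _). apply HD. Qed.

Lemma Div_delta_self : Div M delta delta.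
Proof. split; [apply M_delta | apply leL_refl]. Qed.

Lemma delta_simple : simple delta.
Proof. apply (Div_delta delta), Div_delta_self. Qed.

Lemma omega_compl : omega^-1 * Delta = phi_inv delta.
Proof. unfold phi_inv. now gsimpl. Qed.

Lemma omega_simple : simple omega.
Proof.
  split; [apply delta_simple|].
  unfold leL. rewrite omega_compl. apply M_phi_inv, M_delta.
Qed.

Lemma Nsub_mul x y : Defs.Nsub M delta x -> Defs.Nsub M delta y -> Defs.Nsub M delta (x * y).
Proof.
  intros (l1 & H1 & <-) (l2 & H2 & <-). exists (l1 ++ l2). split; [|apply lprod_app].
  intros z Hz. apply in_app_or in Hz as [Hz | Hz]; auto.
Qed.

(* If v divides both delta and omega, then delta v divides Delta and lies in N,
   hence divides delta. *)
Lemma left_coprime_delta_omega : left_coprime delta omega.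
Proof.
  intros v Mv Hvd Hvw.
  assert (Nv : Defs.Nsub M delta v) by (apply Div_delta; now split).
  assert (Hdv : Div M delta (delta * v)).
  { apply Div_delta. split; [split|].
    - apply M_mul; [apply M_delta | exact Mv].
    - rewrite <- (gmulKV _ delta Delta). now apply leL_mul2l.
    - apply Nsub_mul; [apply (Div_delta delta), Div_delta_self | exact Nv]. }
  destruct Hdv as [_ Hdv]. unfold leL in Hdv. revert Hdv. gsimpl. now apply M_pointed.
Qed.

Lemma reduced_phi k c :
  reduced (- Z.of_nat (S k)) c -> reduced (- Z.of_nat k) (phi c).
Proof.
  intros Hred b (n & Nn & ->) Hb.
  assert (E : phi_inv (PhiZ Delta (- Z.of_nat k) n) = PhiZ Delta (- Z.of_nat (S k)) n)
    by now rewrite !PhiZ_neg.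
  apply leL_phi_inv in Hb. rewrite phiK, E in Hb.
  assert (Hn1 := Hred _ (ex_intro _ n (conj Nn eq_refl)) Hb). rewrite <- E in Hn1.
  now rewrite <- (phi_invK (PhiZ Delta (- Z.of_nat k) n)), Hn1, phi_one.
Qed.

Lemma omega_prod_S_mul k c :
  omega_prod Delta omega (S k) * c = omega * phi_inv (omega_prod Delta omega k * phi c).
Proof. rewrite omega_prod_S_l, phi_inv_mul, phiK. now gsimpl. Qed.

Lemma meet_Delta_omega_prod_S k c :
  M c -> left_coprime delta (omega_prod Delta omega k * phi c) ->
  is_meetL M Delta (omega_prod Delta omega (S k) * c) omega.
Proof.
  intros Mc Hcop. rewrite omega_prod_S_mul.
  apply meet_Delta_left_coprime; [apply omega_simple | |].
  - apply M_phi_inv, M_mul; [apply M_omega_prod, omega_simple | exact (M_phi c Mc)].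
  - rewrite omega_compl. now apply left_coprime_phi_inv.
Qed.

Lemma left_coprime_delta_omega_prod k : forall c,
  M c -> reduced (- Z.of_nat k) c -> left_coprime delta (omega_prod Delta omega k * c).
Proof.
  induction k as [|k IH]; intros c Mc Hred v Mv Hvd Hvc.
  - cbn [omega_prod] in Hvc. rewrite gmul1l in Hvc.
    apply Hred; [|exact Hvc]. exists v. split; [|now rewrite PhiZ_neg].
    apply (Div_delta v). now split.
  - apply left_coprime_delta_omega; [exact Mv | exact Hvd |].
    pose proof (IH (phi c) (M_phi c Mc) (reduced_phi k c Hred)) as Hcop.
    destruct (meet_Delta_omega_prod_S k c Mc Hcop) as (_ & _ & Hmax).
    apply Hmax; [exact (leL_trans _ _ _ Hvd (proj2 delta_simple)) | exact Hvc].
Qed.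

Lemma simple_prod_omega_prod (Homega : omega <> gone) k : forall c L,
  M c -> reduced (- Z.of_nat k) c -> simple_prod L (omega_prod Delta omega k * c) ->
  k <= L /\ simple_prod (L - k) c.
Proof.
  induction k as [|k IH]; intros c L Mc Hred HL.
  - cbn [omega_prod] in HL. rewrite gmul1l in HL. rewrite Nat.sub_0_r. split; [lia | exact HL].
  - pose proof (left_coprime_delta_omega_prod k (phi c) (M_phi c Mc) (reduced_phi k c Hred))
      as Hcop.
    pose proof (meet_Delta_omega_prod_S k c Mc Hcop) as Hmeet.
    destruct L as [|L].
    + exfalso. apply Homega.
      assert (E : omega_prod Delta omega (S k) * c = gone) by (inversion HL; auto).
      destruct Hmeet as (_ & Hle & _). rewrite E in Hle.
      apply leL_antisym; [exact Hle | apply leL_one, omega_simple].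
    + pose proof (simple_prod_meet_Delta L _ _ HL Hmeet) as Hrest.
      rewrite omega_prod_S_mul, gmulK in Hrest.
      apply simple_prod_phi in Hrest. rewrite phi_invK in Hrest.
      destruct (IH (phi c) L (M_phi c Mc) (reduced_phi k c Hred) Hrest) as [Hk Hc].
      split; [lia|]. apply simple_prod_phi_inv in Hc. rewrite phiK in Hc. exact Hc.
Qed.

End Parabolic.
End Garside.

Theorem lemma5p7 (G : Group) (M : G -> Prop) (Delta delta : G)
  (HG : GarsideStructure M Delta) (HP : ParabolicSub M Delta delta)
  (k : nat) (c : G) (Mc : M c)
  (Hnle : ~ leL M (PhiZ Delta (- Z.of_nat k) (gmul (ginv delta) Delta)) c)
  (Hred : reduced M Delta delta (- Z.of_nat k) c)
  (Ma : M (gmul (omega_prod Delta (gmul (ginv delta) Delta) k) c)) :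
  lg M Delta (gmul (omega_prod Delta (gmul (ginv delta) Delta) k) c)
  = (lg M Delta c + k)%nat.
Proof.
  (* The hypothesis on Phi^-k(omega) is needed only to exclude delta = Delta. *)
  assert (Homega : gmul (ginv delta) Delta <> gone).
  { intro E. apply Hnle. rewrite E. unfold PhiZ. gsimpl. now apply leL_one. }
  apply Nat.le_antisymm.
  - pose proof (lg_mul_le HG (omega_prod Delta (gmul (ginv delta) Delta) k) c).
    pose proof (lg_omega_prod_le HG _ k (omega_simple HG delta HP)).
    lia.
  - pose proof (simple_prod_leL_Delta_pow HG _ _ Ma (leL_Delta_pow_lg HG _)) as Ha.
    destruct (simple_prod_omega_prod HG delta HP Homega k c _ Mc Hred Ha) as [Hk Hc].
    pose proof (lg_simple_prod_le HG _ _ Hc).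
    lia.
Qed.
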